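(* Let $a<b$, $n\ge1$, and let $I_n: a=x_0<x_1<\cdots<x_n=b$ be the uniform partition with $x_{i+1}-x_i=h=\frac{b-a}{n}$ for $i=0,\dots,n-1$. Let $f:[a,b]\rightarrow\mathbb{R}$ be a twice continuously differentiable mapping in $(a,b)$ with $f''\in L^2[a,b]$. Define \[ S(f,I_n)=\frac{h}{2}\sum_{i=0}^{n-1}\left[f\left(\frac{3x_i+x_{i+1}}{4}\right)+f\left(\frac{x_i+3x_{i+1}}{4}\right)\right] \] and $R(f,I_n)=\int_a^b f(x)\,dx-S(f,I_n)$. Then \[ |R(f,I_n)|\leq \frac{(b-a)^{5/2}}{4\sqrt{3}\pi n^2}\|f''\|_2. \]
   Context: $\|g\|_2=\left(\int_a^b g(t)^2\,dt\right)^{1/2}$. *)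

From HB Require Import structures.
From mathcomp Require Import all_boot all_order all_algebra.
From mathcomp Require Import all_classical all_reals all_analysis.
Set Implicit Arguments. Unset Strict Implicit. Unset Printing Implicit Defensive.
Import Order.TTheory GRing.Theory Num.Theory.
Import numFieldNormedType.Exports.
Local Open Scope classical_set_scope.
Local Open Scope ring_scope.

Definition node (R : realType) (a b : R) (n i : nat) : R :=
  a + i%:R * ((b - a) / n%:R).

Definition quadS (R : realType) (f : R -> R) (a b : R) (n : nat) : R :=
  ((b - a) / n%:R) / 2 *
  \sum_(i < n) (f ((3 * node a b n i + node a b n i.+1) / 4)
              + f ((node a b n i + 3 * node a b n i.+1) / 4)).

Definition quadR (R : realType) (f : R -> R) (a b : R) (n : nat) : R :=
  Rintegral lebesgue_measure `[a, b] f - quadS f a b n.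

Definition L2norm (R : realType) (g : R -> R) (a b : R) : R :=
  Num.sqrt (Rintegral lebesgue_measure `[a, b] (fun t => g t ^+ 2)).

From HB Require Import structures.
From mathcomp Require Import all_boot all_order all_algebra.
From mathcomp Require Import all_classical all_reals all_analysis.
From mathcomp Require Import measurable_realfun.
From mathcomp Require Import lra ring.
Set Implicit Arguments. Unset Strict Implicit. Unset Printing Implicit Defensive.
Import Order.TTheory GRing.Theory Num.Theory.
Import numFieldNormedType.Exports.
Local Open Scope classical_set_scope.
Local Open Scope ring_scope.

(* Proof idea: the estimate is proved with the L^1 norm of f'' and the constant
   1/32, which is better than 1/(4 sqrt 3 pi).  On each cell of length h the
   two-point rule is the midpoint rule on both halves.  The error of the
   midpoint rule on [c, d] is the integral of the first-order Taylor remainder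
   at the midpoint m (the tangent line at m is integrated exactly), and that
   remainder is at most |x - m| times the L^1 norm of f'' between m and x; this
   gives the bound (d - c)^2/8 ||f''||_{L^1[c,d]}.  Summing over the half cells
   gives |R| <= h^2/32 ||f''||_1, and Cauchy-Schwarz ||f''||_1 <=
   sqrt(b - a) ||f''||_2 finishes the proof. *)

Section interval_integrals.
Variable R : realType.
Notation mu := (@lebesgue_measure R).
Implicit Types (g : R -> R) (u v w : R).

Lemma within_itv_continuous g s t u v : s < u -> v < t ->
  (forall x, s < x < t -> {for x, continuous g}) ->
  {within `[u, v], continuous g}.
Proof.
move=> su vt cg; apply: continuous_in_subspaceT => x.
rewrite inE /= in_itv /= => /andP[ux xv]; apply: cg.
by rewrite (lt_le_trans su ux) (le_lt_trans xv vt).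
Qed.

Lemma measurable_fun_itv_continuous g u v :
  (forall x, u < x < v -> {for x, continuous g}) -> measurable_fun `[u, v] g.
Proof.
move=> cg; apply: (@measurable_fun_itv_cc _ _ _ false true).
apply: open_continuous_measurable_fun; first exact: interval_open.
by move=> x; rewrite inE /= in_itv /= => /cg.
Qed.

Lemma integrable_itv_continuous g u v :
  {within `[u, v], continuous g} -> mu.-integrable `[u, v] (EFin \o g).
Proof. by apply: continuous_compact_integrable; exact: segment_compact. Qed.

Lemma integrable_itv_sub g u v u' v' : u <= u' -> v' <= v ->
  mu.-integrable `[u, v] (EFin \o g) -> mu.-integrable `[u', v'] (EFin \o g).
Proof.
by move=> uu' v'v; apply: integrableS => //; apply: subset_itv; rewrite bnd_simp.
Qed.

Lemma Rintegral_itv_oo_cc g u v : mu.-integrable `[u, v] (EFin \o g) ->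
  \int[mu]_(x in `]u, v[) g x = \int[mu]_(x in `[u, v]) g x.
Proof.
move=> ig; rewrite Rintegral_itv_bndo_bndc ?Rintegral_itv_obnd_cbnd //;
  by apply: integrableS ig => //; apply: subset_itv; rewrite bnd_simp.
Qed.

Lemma Rintegral_itv_split g u v w : u <= v -> v <= w ->
  mu.-integrable `[u, w] (EFin \o g) ->
  \int[mu]_(x in `[u, w]) g x =
    \int[mu]_(x in `[u, v]) g x + \int[mu]_(x in `[v, w]) g x.
Proof.
move=> uv vw ig; rewrite -(@Rintegral_itv_obnd_cbnd _ v (BRight w)); last first.
  by apply: integrableS ig => //; apply: subset_itv; rewrite bnd_simp.
have := @Rintegral_itvB R g (BLeft u) (BRight w) v ig.
by rewrite !bnd_simp => /(_ uv vw) <-; rewrite addrC subrK.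
Qed.

Lemma le_normr_Rintegral_itv (g k : R -> R) u v :
  mu.-integrable `[u, v] (EFin \o g) -> mu.-integrable `[u, v] (EFin \o k) ->
  (forall x, u < x < v -> `|g x| <= k x) ->
  `|\int[mu]_(x in `[u, v]) g x| <= \int[mu]_(x in `[u, v]) k x.
Proof.
move=> ig ik gk; rewrite -!Rintegral_itv_oo_cc //.
have sub : `]u, v[ `<=` `[u, v] by apply: subset_itv; rewrite bnd_simp.
have ig' : mu.-integrable `]u, v[ (EFin \o g) by exact: integrableS ig.
have ik' : mu.-integrable `]u, v[ (EFin \o k) by exact: integrableS ik.
apply: (le_trans (le_normr_Rintegral _ ig')) => //.
by apply: le_Rintegral => //; apply: eq_integrable (integrable_abse ig').
Qed.

Lemma Rintegral_itv_derive1 (F G : R -> R) u v : u < v ->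
  (forall x, u <= x <= v -> derivable F x 1) ->
  {within `[u, v], continuous G} ->
  (forall x, u < x < v -> derive1 F x = G x) ->
  \int[mu]_(x in `[u, v]) G x = F v - F u.
Proof.
move=> uv dF cG FG.
have cF y : u <= y <= v -> {for y, continuous F}.
  by move=> /dF /derivable1_diffP /differentiable_continuous.
rewrite /Rintegral (@continuous_FTC2 R G F u v uv cG) //; split.
- by move=> x; rewrite in_itv /= => /andP[ux xv]; apply: dF; rewrite !ltW.
- by apply: cvg_at_right_filter; apply: cF; rewrite lexx ltW.
- by apply: cvg_at_left_filter; apply: cF; rewrite lexx ltW.
Qed.

Lemma continuous_affine s t : continuous (fun x : R => s * x + t).
Proof.
move=> x; apply: continuousD; last exact: cvg_cst.
by apply: continuousM; [exact: cvg_cst | exact: cvg_id].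
Qed.

Lemma integrable_itv_affine s t u v :
  mu.-integrable `[u, v] (EFin \o (fun x => s * x + t)).
Proof.
by apply: integrable_itv_continuous; exact/continuous_subspaceT/continuous_affine.
Qed.

Lemma Rintegral_itv_affine s t u v : u < v ->
  \int[mu]_(x in `[u, v]) (s * x + t) = s * (v ^+ 2 - u ^+ 2) / 2 + t * (v - u).
Proof.
move=> uv.
have dF (x : R) : is_derive x 1 (fun y => s * (y * y) / 2 + t * y) (s * x + t).
  by apply: is_derive_eq; rewrite /GRing.scale /= !mulr0 add0r !mulr1; field.
rewrite (@Rintegral_itv_derive1 (fun y => s * (y * y) / 2 + t * y)) //.
- by field.
- exact/continuous_subspaceT/continuous_affine.
- by move=> x _; rewrite derive1E derive_val.
Qed.

Lemma Rintegral_itv_cst c u v : u < v -> \int[mu]_(x in `[u, v]) c = c * (v - u).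
Proof.
move=> uv; transitivity (\int[mu]_(x in `[u, v]) (0 * x + c)).
  by apply: eq_Rintegral => x _; rewrite mul0r add0r.
by rewrite Rintegral_itv_affine // !mul0r add0r.
Qed.

End interval_integrals.

Lemma ler_norm_amgm (R : realFieldType) (y t : R) : 0 < t ->
  `|y| <= y ^+ 2 / (2 * t) + t / 2.
Proof.
move=> t0; rewrite -real_normK ?num_real //.
have : 0 <= (`|y| - t) ^+ 2 / (2 * t) by rewrite divr_ge0 ?sqr_ge0 // mulr_ge0 // ltW.
have -> : (`|y| - t) ^+ 2 / (2 * t) = `|y| ^+ 2 / (2 * t) + t / 2 - `|y|.
  by field; rewrite gt_eqF.
by rewrite subr_ge0.
Qed.

Lemma le_sqrt_mul_of_amgm (R : rcfType) (P N L : R) : 0 <= N -> 0 < L ->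
  (forall t, 0 < t -> P <= N / (2 * t) + t / 2 * L) ->
  P <= Num.sqrt L * Num.sqrt N.
Proof.
move=> N0 L0 amgm; have sL0 : 0 < Num.sqrt L by rewrite sqrtr_gt0.
have [N_eq0|N_neq0] := eqVneq N 0.
  rewrite N_eq0 sqrtr0 mulr0; apply/negPn/negP; rewrite -ltNge => P0.
  have := amgm (P / L) (divr_gt0 P0 L0).
  rewrite N_eq0 mul0r add0r mulrAC divfK ?gt_eqF //; lra.
have sN0 : 0 < Num.sqrt N by rewrite sqrtr_gt0 lt_neqAle eq_sym N_neq0.
have := amgm _ (divr_gt0 sN0 sL0).
have -> : N / (2 * (Num.sqrt N / Num.sqrt L)) + Num.sqrt N / Num.sqrt L / 2 * L =
    Num.sqrt L * Num.sqrt N.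
  move: (sqr_sqrtr N0) (sqr_sqrtr (ltW L0)) sN0 sL0.
  set sN := Num.sqrt N; set sL := Num.sqrt L => <- <- sN0 sL0.
  by field; rewrite !gt_eqF.
by [].
Qed.

Definition L1norm (R : realType) (g : R -> R) (u v : R) : R :=
  \int[lebesgue_measure]_(x in `[u, v]) `|g x|.

Lemma L1norm_ge0 (R : realType) (g : R -> R) u v : 0 <= L1norm g u v.
Proof. exact: Rintegral_ge0. Qed.

Lemma L1norm_le_subitv (R : realType) (g : R -> R) u v s t : u <= s -> t <= v ->
  lebesgue_measure.-integrable `[u, v] (EFin \o (fun x => `|g x|)) ->
  L1norm g s t <= L1norm g u v.
Proof.
move=> us tv ig; rewrite /L1norm /Rintegral.
have sub : `[s, t] `<=` `[u, v] by apply: subset_itv; rewrite bnd_simp.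
have ig' : lebesgue_measure.-integrable `[s, t] (EFin \o (fun x => `|g x|)).
  exact: integrableS ig.
apply: fine_le; [exact: integrable_fin_num | exact: integrable_fin_num |].
apply: ge0_subset_integral => //; try exact: measurable_itv.
by case/integrableP: ig.
Qed.

Section Cauchy_Schwarz.
Variable R : realType.
Notation mu := (@lebesgue_measure R).
Variables (g : R -> R) (u v : R).
Hypothesis mg : measurable_fun `[u, v] g.
Hypothesis ig2 : mu.-integrable `[u, v] (fun x => (g x ^+ 2)%:E).

Lemma integrable_norm_of_sqr : mu.-integrable `[u, v] (EFin \o (fun x => `|g x|)).
Proof.
apply: (@le_integrable _ _ _ mu _ _ _ (EFin \o (fun x => 1 + g x ^+ 2))).
- exact: measurable_itv.
- by apply/measurable_EFinP; apply: measurableT_comp.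
- move=> x _ /=; rewrite !normr_id lee_fin [leRHS]ger0_norm ?addr_ge0 ?sqr_ge0 //.
  by rewrite -real_normK ?num_real //; have := normr_ge0 (g x); nra.
- have i1 : mu.-integrable `[u, v] (EFin \o cst (1 : R)).
    apply: integrable_itv_continuous; apply: continuous_subspaceT => x.
    exact: cst_continuous.
  have := @integrableD _ _ _ mu `[u, v] (measurable_itv _) _ _ i1 ig2.
  by apply: eq_integrable => //; exact: measurable_itv.
Qed.

Lemma L1norm_le_L2norm : u < v -> L1norm g u v <= Num.sqrt (v - u) * L2norm g u v.
Proof.
move=> uv; apply: le_sqrt_mul_of_amgm; rewrite ?subr_gt0 //.
  by apply: Rintegral_ge0 => x _; exact: sqr_ge0.
move=> t t0.
have i2 : mu.-integrable `[u, v] (EFin \o (fun x => g x ^+ 2 / (2 * t))).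
  have := @integrableZr _ _ _ mu `[u, v] (measurable_itv _) (2 * t)^-1 _ ig2.
  by apply: eq_integrable => //; exact: measurable_itv.
have it : mu.-integrable `[u, v] (EFin \o cst (t / 2)).
  apply: integrable_itv_continuous; apply: continuous_subspaceT => x.
  exact: cst_continuous.
rewrite -(@Rintegral_itv_cst R (t / 2) u v uv) -RintegralZr // -RintegralD //.
apply: le_Rintegral => //; first exact: integrable_norm_of_sqr.
- have := @integrableD _ _ _ mu `[u, v] (measurable_itv _) _ _ i2 it.
  by apply: eq_integrable => //; exact: measurable_itv.
- by move=> x _; exact: ler_norm_amgm.
Qed.

End Cauchy_Schwarz.

Section uniform_partition.
Variables (R : realType) (a b : R) (n : nat).
Hypotheses (ab : a < b) (n_gt0 : (0 < n)%N).
Local Notation h := ((b - a) / n%:R).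

Lemma step_gt0 : 0 < h.
Proof. by rewrite divr_gt0 ?ltr0n // subr_gt0. Qed.

Lemma nodeS i : node a b n i.+1 = node a b n i + h.
Proof. by rewrite /node -natr1; ring. Qed.

Lemma node_ge i : a <= node a b n i.
Proof. by rewrite /node lerDl mulr_ge0 // ltW // step_gt0. Qed.

Lemma node_n : node a b n n = b.
Proof. by rewrite /node mulrC divfK ?pnatr_eq0 -?lt0n //; ring. Qed.

Lemma node_le i : (i <= n)%N -> node a b n i <= b.
Proof.
move=> i_le_n; rewrite -[leRHS]node_n /node lerD2l ler_wpM2r ?ler_nat //.
exact: ltW step_gt0.
Qed.

End uniform_partition.

Definition two_point (R : realType) (f : R -> R) (c d : R) : R :=
  f ((3 * c + d) / 4) + f ((c + 3 * d) / 4).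

Section two_point_rule.
Variables (R : realType) (a b : R) (f : R -> R).
Notation mu := (@lebesgue_measure R).
Local Notation f1 := (derive1 f).
Local Notation f2 := (derive1 (derive1 f)).
Hypothesis ab : a < b.
Hypothesis df : forall x, a < x < b -> derivable f x 1.
Hypothesis df1 : forall x, a < x < b -> derivable f1 x 1.
Hypothesis cf2 : forall x, a < x < b -> {for x, continuous f2}.
Hypothesis if2 : mu.-integrable `[a, b] (fun x => (f2 x ^+ 2)%:E).

Lemma measurable_f2 : measurable_fun `[a, b] f2.
Proof. exact: measurable_fun_itv_continuous. Qed.

Lemma integrable_abs_f2 u v : a <= u -> v <= b ->
  mu.-integrable `[u, v] (EFin \o (fun x => `|f2 x|)).
Proof.
move=> au vb; apply: integrable_itv_sub au vb _.
exact: integrable_norm_of_sqr measurable_f2 if2.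
Qed.

Lemma L1norm_f2_le u v s t : a <= u -> u <= s -> t <= v -> v <= b ->
  L1norm f2 s t <= L1norm f2 u v.
Proof.
by move=> au us tv vb; apply: L1norm_le_subitv; last exact: integrable_abs_f2.
Qed.

Lemma L1norm_f2_split u v w : a <= u -> u <= v -> v <= w -> w <= b ->
  L1norm f2 u w = L1norm f2 u v + L1norm f2 v w.
Proof.
by move=> au uv vw wb; apply: Rintegral_itv_split => //; exact: integrable_abs_f2.
Qed.

Lemma normr_derive1_sub s t : a < s -> s <= t -> t < b ->
  `|f1 t - f1 s| <= L1norm f2 s t.
Proof.
move=> a_s st tb; have [<-|s_neq_t] := eqVneq s t.
  by rewrite subrr normr0 L1norm_ge0.
have {s_neq_t} s_lt_t : s < t by rewrite lt_neqAle s_neq_t.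
have cf2_st : {within `[s, t], continuous f2} by exact: within_itv_continuous cf2.
rewrite -(Rintegral_itv_derive1 s_lt_t _ cf2_st) //.
- apply: le_normr_Rintegral; first exact: measurable_itv.
  exact: integrable_itv_continuous.
- move=> x /andP[sx xt]; apply: df1.
  by rewrite (lt_le_trans a_s sx) (le_lt_trans xt tb).
Qed.

Lemma exists_MVT u v : a < u -> u < v -> v < b ->
  exists2 c, u < c < v & f v - f u = f1 c * (v - u).
Proof.
move=> au uv vb.
have df_uv x : x \in `]u, v[ -> is_derive x 1 f (f1 x).
  rewrite in_itv /= => /andP[ux xv]; rewrite derive1E; apply: derivableP.
  by apply: df; rewrite (lt_trans au ux) (lt_trans xv vb).
have cf_uv : {within `[u, v], continuous f}.
  apply: within_itv_continuous au vb _ => x /df.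
  by move=> /derivable1_diffP /differentiable_continuous.
have [c] := MVT uv df_uv cf_uv.
by rewrite in_itv /= => /andP[uc cv] fvu; exists c; rewrite ?uc.
Qed.

Definition taylor_rem m x := f x - f m - f1 m * (x - m).

Lemma normr_taylor_rem_right m x : a < m -> m <= x -> x < b ->
  `|taylor_rem m x| <= (x - m) * L1norm f2 m x.
Proof.
move=> am mx xb; have [<-|m_neq_x] := eqVneq m x.
  by rewrite /taylor_rem !subrr mulr0 subrr normr0 mul0r.
have {m_neq_x} m_lt_x : m < x by rewrite lt_neqAle m_neq_x.
have [c /andP[mc cx] fxm] := exists_MVT am m_lt_x xb.
have -> : taylor_rem m x = (x - m) * (f1 c - f1 m) by rewrite /taylor_rem fxm; ring.
rewrite normrM ger0_norm ?subr_ge0 // ler_wpM2l ?subr_ge0 //.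
apply: le_trans (normr_derive1_sub am (ltW mc) (lt_trans cx xb)) _.
by apply: L1norm_f2_le; rewrite ?(ltW am) ?(ltW cx) ?(ltW xb).
Qed.

Lemma normr_taylor_rem_left m x : a < x -> x <= m -> m < b ->
  `|taylor_rem m x| <= (m - x) * L1norm f2 x m.
Proof.
move=> ax xm mb; have [->|x_neq_m] := eqVneq x m.
  by rewrite /taylor_rem !subrr mulr0 subrr normr0 mul0r.
have {x_neq_m} x_lt_m : x < m by rewrite lt_neqAle x_neq_m.
have [c /andP[xc cm] fmx] := exists_MVT ax x_lt_m mb.
have -> : taylor_rem m x = (m - x) * (f1 m - f1 c).
  by rewrite /taylor_rem -[f x - f m]opprB fmx; ring.
rewrite normrM ger0_norm ?subr_ge0 // ler_wpM2l ?subr_ge0 //.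
apply: le_trans (normr_derive1_sub (lt_trans ax xc) (ltW cm) mb) _.
by apply: L1norm_f2_le; rewrite ?(ltW ax) ?(ltW xc) ?(ltW mb).
Qed.

Lemma normr_taylor_rem_le m x : a < m < b -> a < x < b ->
  `|taylor_rem m x| <= (b - a) * L1norm f2 a b.
Proof.
move=> /andP[am mb] /andP[ax xb].
have L0 := L1norm_ge0 f2 a b.
have [mx|xm] := leP m x.
- apply: le_trans (normr_taylor_rem_right am mx xb) _.
  apply: ler_pM; rewrite ?subr_ge0 ?L1norm_ge0 //; first lra.
  by apply: L1norm_f2_le; rewrite ?lexx ?(ltW am) ?(ltW xb).
- apply: le_trans (normr_taylor_rem_left ax (ltW xm) mb) _.
  apply: ler_pM; rewrite ?subr_ge0 ?L1norm_ge0 ?(ltW xm) //; first lra.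
  by apply: L1norm_f2_le; rewrite ?lexx ?(ltW ax) ?(ltW mb).
Qed.

Lemma integrable_f u v : a <= u -> v <= b -> mu.-integrable `[u, v] (EFin \o f).
Proof.
move=> au vb; apply: integrable_itv_sub au vb _.
(* f is only controlled on ]a, b[: its values at a and b are arbitrary. *)
pose m := (a + b) / 2.
have mab : a < m < b by rewrite /m; apply/andP; split; have := ab; lra.
pose M := `|f m| + `|f1 m| * (b - a) + (b - a) * L1norm f2 a b.
have fM x : a < x < b -> `|f x| <= M.
  move=> xab; have xm : `|x - m| <= b - a.
    move: xab mab => /andP[? ?] /andP[? ?].
    by rewrite ler_norml; apply/andP; split; lra.
  have -> : f x = f m + f1 m * (x - m) + taylor_rem m x by rewrite /taylor_rem; ring.
  apply: le_trans (ler_normD _ _) _; apply: lerD (normr_taylor_rem_le mab xab).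
  by apply: le_trans (ler_normD _ _) _; rewrite normrM lerD2l ler_wpM2l.
have M_ge0 : 0 <= M := le_trans (normr_ge0 _) (fM m mab).
apply: measurable_bounded_integrable.
- exact: measurable_itv.
- by have := @compact_finite_measure R _ (@segment_compact R a b).
- apply: measurable_fun_itv_continuous => x /df.
  by move=> /derivable1_diffP /differentiable_continuous.
exists (M + `|f a| + `|f b|); split; rewrite ?num_real // => M' MM' x /=.
rewrite in_itv /= => /andP[ax xb]; apply: le_trans (ltW MM').
have fa0 := normr_ge0 (f a); have fb0 := normr_ge0 (f b).
have [-> | x_neq_a] := eqVneq x a; first lra.
have [-> | x_neq_b] := eqVneq x b; first lra.
have : `|f x| <= M by apply: fM; rewrite !lt_neqAle eq_sym x_neq_a x_neq_b ax xb.
lra.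
Qed.

Lemma integrable_taylor_rem m u v : a <= u -> v <= b ->
  mu.-integrable `[u, v] (EFin \o taylor_rem m).
Proof.
move=> au vb.
have := @integrableB _ _ _ mu `[u, v] (measurable_itv _) _ _ (integrable_f au vb)
  (integrable_itv_affine (f1 m) (f m - f1 m * m) u v).
by apply: eq_integrable => [|x _] //=; rewrite /taylor_rem; congr (_%:E); ring.
Qed.

Lemma normr_Rintegral_taylor_rem_right m d : a < m -> m < d -> d <= b ->
  `|\int[mu]_(x in `[m, d]) taylor_rem m x| <= (d - m) ^+ 2 / 2 * L1norm f2 m d.
Proof.
move=> am md db; set L := L1norm f2 m d.
have -> : (d - m) ^+ 2 / 2 * L = \int[mu]_(x in `[m, d]) (L * x - L * m).
  by rewrite Rintegral_itv_affine //; field.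
apply: le_normr_Rintegral_itv.
- exact: integrable_taylor_rem (ltW am) db.
- exact: integrable_itv_affine.
- move=> x /andP[mx xd].
  apply: le_trans (normr_taylor_rem_right am (ltW mx) (lt_le_trans xd db)) _.
  have -> : L * x - L * m = (x - m) * L by ring.
  rewrite ler_wpM2l ?subr_ge0 ?(ltW mx) //.
  by apply: L1norm_f2_le; rewrite ?lexx ?(ltW am) ?(ltW xd).
Qed.

Lemma normr_Rintegral_taylor_rem_left c m : a <= c -> c < m -> m < b ->
  `|\int[mu]_(x in `[c, m]) taylor_rem m x| <= (m - c) ^+ 2 / 2 * L1norm f2 c m.
Proof.
move=> ac cm mb; set L := L1norm f2 c m.
have -> : (m - c) ^+ 2 / 2 * L = \int[mu]_(x in `[c, m]) (- L * x + L * m).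
  by rewrite Rintegral_itv_affine //; field.
apply: le_normr_Rintegral_itv.
- exact: integrable_taylor_rem ac (ltW mb).
- exact: integrable_itv_affine.
- move=> x /andP[cx xm].
  apply: le_trans (normr_taylor_rem_left (le_lt_trans ac cx) (ltW xm) mb) _.
  have -> : - L * x + L * m = (m - x) * L by ring.
  rewrite ler_wpM2l ?subr_ge0 ?(ltW xm) //.
  by apply: L1norm_f2_le; rewrite ?lexx ?(ltW cx) ?(ltW mb).
Qed.

Lemma midpoint_rule_error c d : a <= c -> c < d -> d <= b ->
  `|\int[mu]_(x in `[c, d]) f x - (d - c) * f ((c + d) / 2)| <=
    (d - c) ^+ 2 / 8 * L1norm f2 c d.
Proof.
move=> ac cd db; set m := (c + d) / 2.
have cm : c < m by rewrite /m; lra.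
have md : m < d by rewrite /m; lra.
have mb : m < b := lt_le_trans md db.
have error_eq : \int[mu]_(x in `[c, d]) f x - (d - c) * f m =
    \int[mu]_(x in `[c, m]) taylor_rem m x + \int[mu]_(x in `[m, d]) taylor_rem m x.
  rewrite -Rintegral_itv_split ?(ltW cm) ?(ltW md) ?integrable_taylor_rem //.
  have -> : \int[mu]_(x in `[c, d]) f x =
      \int[mu]_(x in `[c, d]) (taylor_rem m x + (f1 m * x + (f m - f1 m * m))).
    by apply: eq_Rintegral => x _; rewrite /taylor_rem; ring.
  rewrite RintegralD ?integrable_taylor_rem ?integrable_itv_affine //.
  by rewrite Rintegral_itv_affine // /m; ring.
rewrite error_eq (L1norm_f2_split ac (ltW cm) (ltW md) db).
have -> : (d - c) ^+ 2 / 8 * (L1norm f2 c m + L1norm f2 m d) =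
    (m - c) ^+ 2 / 2 * L1norm f2 c m + (d - m) ^+ 2 / 2 * L1norm f2 m d.
  by rewrite /m; field.
apply: le_trans (ler_normD _ _) (lerD _ _).
- exact: normr_Rintegral_taylor_rem_left.
- exact: normr_Rintegral_taylor_rem_right (le_lt_trans ac cm) md db.
Qed.

Lemma two_point_rule_error c d : a <= c -> c < d -> d <= b ->
  `|\int[mu]_(x in `[c, d]) f x - (d - c) / 2 * two_point f c d| <=
    ((d - c) / 2) ^+ 2 / 8 * L1norm f2 c d.
Proof.
move=> ac cd db; set e := (c + d) / 2.
have ce : c < e by rewrite /e; lra.
have ed : e < d by rewrite /e; lra.
have ae : a <= e := le_trans ac (ltW ce).
have eb : e <= b := le_trans (ltW ed) db.
have err_ce := midpoint_rule_error ac ce eb.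
have err_ed := midpoint_rule_error ae ed db.
rewrite [(c + e) / 2](_ : _ = (3 * c + d) / 4) in err_ce; last by rewrite /e; field.
rewrite [(e + d) / 2](_ : _ = (c + 3 * d) / 4) in err_ed; last by rewrite /e; field.
rewrite (Rintegral_itv_split (ltW ce) (ltW ed) (integrable_f ac db)).
rewrite (L1norm_f2_split ac (ltW ce) (ltW ed) db) /two_point.
set I1 := \int[mu]_(x in `[c, e]) f x; set I2 := \int[mu]_(x in `[e, d]) f x.
have -> : I1 + I2 - (d - c) / 2 * (f ((3 * c + d) / 4) + f ((c + 3 * d) / 4)) =
    (I1 - (e - c) * f ((3 * c + d) / 4)) + (I2 - (d - e) * f ((c + 3 * d) / 4)).
  by rewrite /e; field.
have -> : ((d - c) / 2) ^+ 2 / 8 * (L1norm f2 c e + L1norm f2 e d) =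
    (e - c) ^+ 2 / 8 * L1norm f2 c e + (d - e) ^+ 2 / 8 * L1norm f2 e d.
  by rewrite /e; field.
exact: le_trans (ler_normD _ _) (lerD err_ce err_ed).
Qed.

Lemma composite_rule_error n k : (0 < n)%N -> (k <= n)%N ->
  `|\int[mu]_(x in `[a, node a b n k]) f x -
     (b - a) / n%:R / 2 * \sum_(i < k) two_point f (node a b n i) (node a b n i.+1)|
  <= ((b - a) / n%:R / 2) ^+ 2 / 8 * L1norm f2 a (node a b n k).
Proof.
move=> n_gt0; elim: k => [_ | k IHk k_lt_n].
  rewrite big_ord0 mulr0 subr0 /node mul0r addr0 set_itv1 Rintegral_set1 normr0.
  by rewrite mulr_ge0 ?L1norm_ge0 // divr_ge0 // sqr_ge0.
have ak := node_ge ab n_gt0 k.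
have kk : node a b n k < node a b n k.+1 by rewrite nodeS ltrDl step_gt0.
have kb := node_le ab n_gt0 k_lt_n.
have err_k := two_point_rule_error ak kk kb.
rewrite [node a b n k.+1 - _](_ : _ = (b - a) / n%:R) in err_k; last first.
  by rewrite nodeS; ring.
rewrite (Rintegral_itv_split ak (ltW kk) (integrable_f (lexx a) kb)).
rewrite (L1norm_f2_split (lexx a) ak (ltW kk) kb) big_ord_recr /= [leRHS]mulrDr.
set I1 := \int[mu]_(x in `[a, _]) f x; set I2 := \int[mu]_(x in `[_, _]) f x.
set S := \sum_(i < k) _; set T := two_point f _ _.
have -> : I1 + I2 - (b - a) / n%:R / 2 * (S + T) =
    (I1 - (b - a) / n%:R / 2 * S) + (I2 - (b - a) / n%:R / 2 * T) by ring.
exact: le_trans (ler_normD _ _) (lerD (IHk (ltnW k_lt_n)) err_k).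
Qed.

Lemma normr_quadR_le n : (0 < n)%N ->
  `|quadR f a b n| <= ((b - a) / n%:R) ^+ 2 / 32 * L1norm f2 a b.
Proof.
move=> n_gt0; have := composite_rule_error n_gt0 (leqnn n).
rewrite node_n // [_ ^+ 2 / 32](_ : _ = ((b - a) / n%:R / 2) ^+ 2 / 8) //.
by field; rewrite pnatr_eq0 -lt0n.
Qed.

End two_point_rule.

Lemma powR_5half (R : realType) (x : R) :
  0 <= x -> x `^ (5%:R / 2) = x ^+ 2 * Num.sqrt x.
Proof.
move=> x0; rewrite [5%:R / 2](_ : _ = 2%:R + 2^-1); last by field.
by rewrite powRD ?powR_mulrn ?powR12_sqrt // gt_eqF // addr_gt0 ?invr_gt0.
Qed.

Lemma four_sqrt3_pi_le32 (R : realType) : 4 * Num.sqrt 3 * pi <= 32 :> R.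
Proof.
have s3_le2 : Num.sqrt 3 <= 2 :> R.
  have := sqrtr_ge0 (3 : R); have := @sqr_sqrtr R 3 (ler0n _ 3); nra.
have pi_lt4 : pi < 4 :> R by have := @pihalf_lt2 R; lra.
have := sqrtr_ge0 (3 : R); have := @pi_gt0 R; nra.
Qed.

Lemma ler_two_point_constant (R : realType) (L N : R) (n : nat) :
  0 < L -> (0 < n)%N -> 0 <= N ->
  (L / n%:R) ^+ 2 / 32 * (Num.sqrt L * N) <=
    L `^ (5%:R / 2) / (4 * Num.sqrt 3 * pi * n%:R ^+ 2) * N.
Proof.
move=> L_gt0 n_gt0 N_ge0; rewrite powR_5half; last exact: ltW.
set D := 4 * Num.sqrt 3 * pi.
have D_gt0 : 0 < D by rewrite !mulr_gt0 ?sqrtr_gt0 ?pi_gt0.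
have n_neq0 : n%:R != 0 :> R by rewrite pnatr_eq0 -lt0n.
pose K := L ^+ 2 * Num.sqrt L * N / n%:R ^+ 2.
have K_ge0 : 0 <= K.
  by rewrite /K divr_ge0 ?sqr_ge0 // mulr_ge0 // mulr_ge0 ?sqr_ge0 ?sqrtr_ge0.
rewrite [leLHS](_ : _ = K / 32); last by rewrite /K; field.
rewrite [leRHS](_ : _ = K / D); last by rewrite /K; field; rewrite n_neq0 gt_eqF.
by rewrite ler_wpM2l // lef_pV2 ?posrE // four_sqrt3_pi_le32.
Qed.

Theorem theorem3p2 (R : realType) (a b : R) (n : nat) (f : R -> R) :
  a < b -> (1 <= n)%N ->
  (forall x, a < x < b -> derivable f x 1) ->
  (forall x, a < x < b -> derivable (derive1 f) x 1) ->
  (forall x, a < x < b -> {for x, continuous (derive1n 2 f)}) ->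
  lebesgue_measure.-integrable `[a, b] (fun x => ((derive1n 2 f) x ^+ 2)%:E) ->
  `| quadR f a b n | <=
    (b - a) `^ (5%:R / 2) / (4 * Num.sqrt 3 * pi * (n%:R) ^+ 2)
      * L2norm (derive1n 2 f) a b.
Proof.
move=> ab n_gt0 df df1 cf2 if2.
have L1_le_L2 := L1norm_le_L2norm (measurable_f2 cf2) if2 ab.
apply: le_trans (normr_quadR_le ab df df1 cf2 if2 n_gt0) _.
apply: le_trans (ler_wpM2l _ L1_le_L2) _; first by rewrite divr_ge0 ?sqr_ge0.
apply: ler_two_point_constant => //; [by rewrite subr_gt0 | exact: sqrtr_ge0].
Qed.
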